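(* For every $n\geq 2$, the ladder graph $L_n$ satisfies $\mathcal{R}(L_n)=2$. Consequently, every ladder graph $L_n$ ($n\geq 1$) is a circle graph.
   Context: All graphs are finite and simple. For a word $w$ and distinct letters $x,y$ occurring in $w$, $x$ and $y$ alternate in $w$ if deleting all letters other than copies of $x$ and $y$ yields a word of the form $xyxy\cdots$ or $yxyx\cdots$ (of even or odd length). A graph $G=(V,E)$ is word-representable if there is a word $w$ over $V$ (each vertex occurring in $w$) such that for all distinct $x,y\in V$, $x$ and $y$ alternate in $w$ iff $(x,y)\in E$. A word is $k$-uniform if each letter occurs exactly $k$ times; $G$ is $k$-word-representable if some $k$-uniform word represents it; the representation number $\mathcal{R}(G)$ is the least such $k$. The ladder graph $L_n$ has vertices $1,\ldots,n,1',\ldots,n'$ and the $3n-2$ edges $(i,i+1)$ and $(i',(i+1)')$ for $1\leq i\leq n-1$ and $(i,i')$ for $1\leq i\leq n$. A circle graph is a graph whose vertices can be associated with chords of a circle so that two vertices are adjacent iff their chords cross. *)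

From Stdlib Require Import Reals.
From mathcomp Require Import all_boot.
Set Implicit Arguments. Unset Strict Implicit. Unset Printing Implicit Defensive.

(* A simple graph on a finite vertex type V is given by an adjacency relation
   (symmetric and irreflexive in all uses below). *)

(* x and y alternate in w: the subword of w on {x,y} has no two equal
   consecutive letters, i.e. it is of the form xyxy... or yxyx... *)
Definition alternate (V : eqType) (w : seq V) (x y : V) : bool :=
  sorted (fun a b => a != b) [seq z <- w | (z == x) || (z == y)].

Definition represents (V : finType) (E : rel V) (w : seq V) : Prop :=
  (forall v : V, v \in w) /\
  (forall x y : V, x != y -> (alternate w x y <-> E x y)).

Definition uniform (V : finType) (w : seq V) (k : nat) : Prop :=
  forall v : V, count_mem v w = k.

Definition k_word_representable (V : finType) (E : rel V) (k : nat) : Prop :=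
  exists w : seq V, uniform w k /\ represents E w.

Definition representation_number_is (V : finType) (E : rel V) (k : nat) : Prop :=
  k_word_representable E k /\
  (forall j, k_word_representable E j -> k <= j).

(* Ladder graph L_n: vertex (i, false) is i+1, vertex (i, true) is (i+1)'. *)
Definition ladder (n : nat) : rel ('I_n * bool) :=
  fun u v =>
    ((u.2 == v.2) && ((u.1.+1 == v.1 :> nat) || (v.1.+1 == u.1 :> nat)))
    || ((u.1 == v.1) && (u.2 != v.2)).
Arguments ladder n : clear implicits.

(* A point of the circle is described by its angle
   parameter in [0,1); a chord is a pair of distinct points; the chords of
   a representation have pairwise distinct endpoints (standard convention).
   Two chords cross iff their endpoints interleave around the circle. *)
Definition on_circle (t : R) : Prop := Rle 0 t /\ Rlt t 1.

Definition chords_cross (c d : R * R) : Prop :=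
  let a := Rmin c.1 c.2 in let b := Rmax c.1 c.2 in
  let p := Rmin d.1 d.2 in let q := Rmax d.1 d.2 in
  (Rlt a p /\ Rlt p b /\ Rlt b q) \/ (Rlt p a /\ Rlt a q /\ Rlt q b).

Definition circle_graph (V : finType) (E : rel V) : Prop :=
  exists f : V -> R * R,
    (forall v, on_circle (f v).1 /\ on_circle (f v).2 /\ (f v).1 <> (f v).2) /\
    (forall u v, u <> v ->
       (f u).1 <> (f v).1 /\ (f u).1 <> (f v).2 /\
       (f u).2 <> (f v).1 /\ (f u).2 <> (f v).2) /\
    (forall u v, u <> v -> (E u v <-> chords_cross (f u) (f v))).

From Stdlib Require Import Reals.
From mathcomp Require Import all_boot zify.
Set Implicit Arguments. Unset Strict Implicit. Unset Printing Implicit Defensive.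

(* Both statements come from one chord diagram of L_n with all 4n endpoints
   at distinct integer positions: a vertex v is the chord [a v, b v], two
   vertices are adjacent iff their chords interleave.  Reading the positions
   from left to right and writing the vertex owning each endpoint gives a
   2-uniform word in which x and y alternate iff their chords interleave, and
   rescaling the positions into [0,1) gives a circle representation.  The
   value 2 is optimal because in a 1-uniform word every two letters alternate,
   whereas L_n (n >= 2) is not complete. *)

Lemma filter_pmap (T U : Type) (f : T -> option U) (P : pred U) (s : seq T) :
  [seq u <- pmap f s | P u] = pmap f [seq t <- s | oapp P false (f t)].
Proof.
elim: s => //= t s IH; case Eft: (f t) => [u|] /=; last by rewrite IH.
by case: (P u); rewrite /= ?Eft IH.
Qed.

Lemma filter_iota_sorted (Q : pred nat) (s : seq nat) (N : nat) :
  sorted ltn s -> (forall p, p \in s -> p < N) ->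
  (forall p, p < N -> Q p = (p \in s)) -> [seq p <- iota 0 N | Q p] = s.
Proof.
move=> ss sN QE; apply: (irr_sorted_eq ltn_trans ltnn) => //.
  exact: (sorted_filter ltn_trans _ (iota_ltn_sorted 0 N)).
move=> p; rewrite mem_filter mem_iota add0n /=.
have [pN|Np] := ltnP p N; first by rewrite QE // andbT.
by rewrite andbF; apply/esym/negP => /sN; rewrite ltnNge Np.
Qed.

Lemma uniq_alternate (V : eqType) (w : seq V) (x y : V) : uniq w -> alternate w x y.
Proof.
move=> uw; apply: pairwise_sorted; rewrite -uniq_pairwise.
exact: filter_uniq.
Qed.

Definition interleave (V : Type) (a b : V -> nat) (x y : V) : bool :=
  ((a x < a y) && (a y < b x) && (b x < b y)) ||
  ((a y < a x) && (a x < b y) && (b y < b x)).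

Lemma interleaveC (V : Type) (a b : V -> nat) (x y : V) :
  interleave a b x y = interleave a b y x.
Proof. by rewrite /interleave orbC. Qed.

Lemma INR_div_lt (N x y : nat) : 0 < N ->
  Rlt (Rdiv (INR x) (INR N)) (Rdiv (INR y) (INR N)) <-> x < y.
Proof.
move=> /ltP/lt_0_INR N_gt0; have invN_gt0 := Rinv_0_lt_compat _ N_gt0.
split=> [|/ltP/lt_INR xy]; last exact: Rmult_lt_compat_r.
by move/(Rmult_lt_reg_r _ _ _ invN_gt0)/INR_lt/ltP.
Qed.

Lemma on_circle_INR_div (N x : nat) : x < N -> on_circle (Rdiv (INR x) (INR N)).
Proof.
move=> xN; have N_gt0 : 0 < N by apply: leq_ltn_trans xN.
split; last by rewrite -(Rdiv_diag (INR N)); [apply/INR_div_lt | apply/not_0_INR/eqP; rewrite -lt0n].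
by apply: Rmult_le_pos; [apply: pos_INR | apply/Rlt_le/Rinv_0_lt_compat/lt_0_INR/ltP].
Qed.

Section ChordDiagram.

Variables (V : finType) (a b : V -> nat) (N : nat).
Hypotheses (a_inj : injective a) (b_inj : injective b)
  (a_neq_b : forall u v, a u != b v)
  (a_lt_b : forall v, a v < b v) (b_lt_N : forall v, b v < N).

Definition endpoint (v : V) (p : nat) : bool := (a v == p) || (b v == p).

Definition letter_at (p : nat) : option V := [pick v | endpoint v p].

Definition chord_word : seq V := pmap letter_at (iota 0 N).

Lemma a_lt_N v : a v < N.
Proof. exact: ltn_trans (a_lt_b v) (b_lt_N v). Qed.

Lemma endpoint_unique u v p : endpoint u p -> endpoint v p -> u = v.
Proof.
move=> /orP[]/eqP <- /orP[]/eqP.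
- by move/a_inj.
- by move=> E; move: (a_neq_b u v); rewrite E eqxx.
- by move=> E; move: (a_neq_b v u); rewrite E eqxx.
- by move/b_inj.
Qed.

Lemma letter_atE v p : (letter_at p == Some v) = endpoint v p.
Proof.
rewrite /letter_at; case: pickP => [u Hu|none]; last by rewrite none.
by apply/eqP/idP => [[<-] //|Hv]; rewrite (endpoint_unique Hu Hv).
Qed.

Lemma letter_at_a v : letter_at (a v) = Some v.
Proof. by apply/eqP; rewrite letter_atE /endpoint eqxx. Qed.

Lemma letter_at_b v : letter_at (b v) = Some v.
Proof. by apply/eqP; rewrite letter_atE /endpoint eqxx orbT. Qed.

Lemma filter_chord_word x y (s : seq nat) :
  sorted ltn s -> (forall p, endpoint x p || endpoint y p = (p \in s)) ->
  [seq z <- chord_word | (z == x) || (z == y)] = pmap letter_at s.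
Proof.
move=> ss Es; rewrite filter_pmap; congr pmap.
apply: filter_iota_sorted => // [p|p _]; last first.
  by rewrite -Es -!letter_atE; case: (letter_at p).
by rewrite -Es => /orP[] /orP[]/eqP <-; rewrite ?a_lt_N ?b_lt_N.
Qed.

Lemma count_chord_word v : count_mem v chord_word = 2.
Proof.
rewrite -size_filter (@eq_filter _ _ (fun z => (z == v) || (z == v))).
  rewrite (@filter_chord_word v v [:: a v; b v]) /= ?letter_at_a ?letter_at_b //.
    by rewrite a_lt_b.
  by move=> p; rewrite orbb /endpoint !inE ![p == _]eq_sym.
by move=> z; rewrite orbb.
Qed.

Lemma alternate_chord_word x y : x != y ->
  alternate chord_word x y = interleave a b x y.
Proof.
wlog axy : x y / a x < a y => [wlog_axy xy|xy].
  have [|ayx|/a_inj exy] := ltngtP (a x) (a y); first by move/wlog_axy; apply.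
  - rewrite interleaveC -(wlog_axy y x ayx); last by rewrite eq_sym.
    by rewrite /alternate; congr sorted; apply: eq_filter => z; rewrite orbC.
  - by rewrite exy eqxx in xy.
have yx : y != x by rewrite eq_sym.
have bx_ay : b x != a y by rewrite eq_sym a_neq_b.
have bx_by : b x != b y by apply: contra xy => /eqP/b_inj ->.
have endpointsE s : perm_eq s [:: a x; b x; a y; b y] ->
    forall p, endpoint x p || endpoint y p = (p \in s).
  by move=> /perm_mem Ps p; rewrite Ps !inE ![p == _]eq_sym /endpoint !orbA.
have axbx := a_lt_b x; have ayby := a_lt_b y.
rewrite /alternate /interleave.
have [bx_lt_ay|ay_lt_bx|/eqP] := ltngtP (b x) (a y); last by rewrite (negPf bx_ay).
  rewrite (@filter_chord_word x y [:: a x; b x; a y; b y]).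
  - by rewrite /= !letter_at_a !letter_at_b /= eqxx; apply/esym; lia.
  - by rewrite /= axbx bx_lt_ay ayby.
  - exact/endpointsE/perm_refl.
have [bx_lt_by|by_lt_bx|/eqP] := ltngtP (b x) (b y); last by rewrite (negPf bx_by).
  rewrite (@filter_chord_word x y [:: a x; a y; b x; b y]).
  - by rewrite /= !letter_at_a !letter_at_b /= xy yx; apply/esym; lia.
  - by rewrite /= axy ay_lt_bx bx_lt_by.
  - by apply: endpointsE; rewrite perm_cons (perm_catCA [:: a y] [:: b x]).
rewrite (@filter_chord_word x y [:: a x; a y; b y; b x]).
- by rewrite /= !letter_at_a !letter_at_b /= xy yx eqxx; apply/esym; lia.
- by rewrite /= axy ayby by_lt_bx.
- by apply: endpointsE; rewrite perm_cons (perm_catC [:: a y; b y] [:: b x]).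
Qed.

Lemma chords_word_representable (E : rel V) :
  (forall x y, x != y -> E x y = interleave a b x y) -> k_word_representable E 2.
Proof.
move=> Eab; exists chord_word; split; first exact: count_chord_word.
split=> [v|x y xy]; first by rewrite -has_pred1 has_count count_chord_word.
by rewrite alternate_chord_word // Eab.
Qed.

Lemma chords_circle_graph (E : rel V) : 0 < N ->
  (forall x y, x != y -> E x y = interleave a b x y) -> circle_graph E.
Proof.
move=> N_gt0 Eab; pose angle p := Rdiv (INR p) (INR N).
have angle_lt p q : Rlt (angle p) (angle q) <-> p < q by apply: INR_div_lt.
have angle_neq p q : p != q -> angle p <> angle q.
  move=> pq Epq; have [/angle_lt|/angle_lt|Epq'] := ltngtP p q.
  - by rewrite Epq => /Rlt_irrefl.
  - by rewrite Epq => /Rlt_irrefl.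
  - by rewrite Epq' eqxx in pq.
exists (fun v => (angle (a v), angle (b v))); split; [|split].
- move=> v /=; split; first exact/on_circle_INR_div/a_lt_N.
  by split; [exact/on_circle_INR_div/b_lt_N | apply/angle_neq; rewrite neq_ltn a_lt_b].
- move=> u v /eqP uv /=; split; [|split; [|split]]; apply: angle_neq => //.
  + by apply: contra uv => /eqP/a_inj ->.
  + by rewrite eq_sym.
  + by apply: contra uv => /eqP/b_inj ->.
- move=> u v /eqP uv; rewrite Eab // /interleave /chords_cross /=.
  have ab_le w : Rle (angle (a w)) (angle (b w)) by apply/Rlt_le/angle_lt.
  rewrite !Rmin_left ?Rmax_right ?ab_le //.
  split=> [/orP[]/andP[/andP[h1 h2] h3]|[][h1 [h2 h3]]].
  + by left; split; [|split]; apply/angle_lt.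
  + by right; split; [|split]; apply/angle_lt.
  + by move: h1 h2 h3 => /angle_lt-> /angle_lt-> /angle_lt->.
  + by move: h1 h2 h3 => /angle_lt-> /angle_lt-> /angle_lt->; rewrite orbT.
Qed.

End ChordDiagram.

Lemma word_representable_lt2_complete (V : finType) (E : rel V) k :
  k_word_representable E k -> k < 2 -> forall x y, x != y -> E x y.
Proof.
move=> [w [uw [w_all w_alt]]] k_lt2 x y xy; apply/w_alt => //.
case: k k_lt2 uw => [_|[_|//]] uw.
  by move: (w_all x); rewrite -has_pred1 has_count uw.
by apply/uniq_alternate/count_mem_uniq => z; rewrite uw w_all.
Qed.

(* Vertex (i, s) is the chord A_i = [2i, 4n-2i] if s = odd i and
   B_i = [2i+3, 4n+3-2i] otherwise.  The A's are pairwise nested, so are the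
   B's, and A_i crosses B_j iff |i - j| <= 1; the parity twist makes every
   edge of L_n (a rung, or a step along one side) such a pair A_i, B_j. *)
Definition ladder_a n (v : 'I_n * bool) : nat :=
  if v.2 == odd v.1 then 2 * v.1 else 2 * v.1 + 3.

Definition ladder_b n (v : 'I_n * bool) : nat :=
  if v.2 == odd v.1 then 4 * n - 2 * v.1 else 4 * n + 3 - 2 * v.1.

Section LadderChords.

Variable n : nat.

(* [modn2] keeps the parities of [i] and [j] visible to [lia] once
   [odd i] and [odd j] have been case-split. *)
Ltac ladder_lia i j s t :=
  move: (ltn_ord i) (ltn_ord j) (modn2 i) (modn2 j);
  case: s; case: t; case: (odd i); case: (odd j) => /=; lia.

Lemma ladder_a_inj : injective (@ladder_a n).
Proof.
move=> [i s] [j t]; rewrite /ladder_a /= => Eij; apply/eqP.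
rewrite xpair_eqE -val_eqE /=; move: Eij; ladder_lia i j s t.
Qed.

Lemma ladder_b_inj : injective (@ladder_b n).
Proof.
move=> [i s] [j t]; rewrite /ladder_b /= => Eij; apply/eqP.
rewrite xpair_eqE -val_eqE /=; move: Eij; ladder_lia i j s t.
Qed.

Lemma ladder_a_neq_b (u v : 'I_n * bool) : ladder_a u != ladder_b v.
Proof.
case: u v => [i s] [j t]; rewrite /ladder_a /ladder_b /=; ladder_lia i j s t.
Qed.

Lemma ladder_a_lt_b (v : 'I_n * bool) : ladder_a v < ladder_b v.
Proof.
case: v => [i s]; rewrite /ladder_a /ladder_b /=; move: (ltn_ord i).
by case: s; case: (odd i) => /=; lia.
Qed.

Lemma ladder_b_lt (v : 'I_n * bool) : ladder_b v < 4 * n + 4.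
Proof. by case: v => [i s]; rewrite /ladder_b /=; case: (_ == _); lia. Qed.

Lemma ladder_interleave (x y : 'I_n * bool) : x != y ->
  ladder n x y = interleave (@ladder_a n) (@ladder_b n) x y.
Proof.
case: x y => [i s] [j t]; rewrite /ladder /interleave /ladder_a /ladder_b /=.
rewrite xpair_eqE -val_eqE /=; ladder_lia i j s t.
Qed.

End LadderChords.

Lemma ladder_not_complete n : 1 < n -> ~ (forall x y, x != y -> ladder n x y).
Proof. by move=> n_gt1 /(_ (Ordinal (ltnW n_gt1), false) (Ordinal n_gt1, true) isT). Qed.

Lemma ladder_2_word_representable n : k_word_representable (ladder n) 2.
Proof.
apply: (chords_word_representable (@ladder_a_inj n) (@ladder_b_inj n)
  (@ladder_a_neq_b n) (@ladder_a_lt_b n) (@ladder_b_lt n)).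
exact: ladder_interleave.
Qed.

Lemma ladder_circle_graph n : circle_graph (ladder n).
Proof.
apply: (chords_circle_graph (@ladder_a_inj n) (@ladder_b_inj n)
  (@ladder_a_neq_b n) (@ladder_a_lt_b n) (@ladder_b_lt n)); first by rewrite addn4.
exact: ladder_interleave.
Qed.

Theorem theorem19 :
  (forall n : nat, 2 <= n -> representation_number_is (ladder n) 2) /\
  (forall n : nat, 1 <= n -> circle_graph (ladder n)).
Proof.
split=> n n_ge; last exact: ladder_circle_graph.
split=> [|j /word_representable_lt2_complete complete].
  exact: ladder_2_word_representable.
by rewrite leqNgt; apply/negP => /complete; apply: ladder_not_complete.
Qed.
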